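(* Let $G$ be a finite group. The monoid $(\mathsf{Sym}_{G,0}/\sim)$ of stable equivalence classes of $0$-dimensional locality preserving symmetries is a group, and there is a group isomorphism $\Omega:(\mathsf{Sym}_{G,0}/\sim)\to H^2(G,U(1))$.
   Context: A $0$-dimensional spin system is a single site: $\mathcal A=\mathcal B(\mathcal H)$ for a finite-dimensional Hilbert space $\mathcal H$. A $0$-dimensional locality preserving symmetry (LPS) $(\beta,\mathcal A)$ is a group homomorphism $\beta:G\to\mathrm{Aut}(\mathcal A)$ (equivalently $\beta_g=\mathrm{Ad}(U(g))$ for a projective unitary representation $U$). An on-site symmetry is one with $\beta_g=\mathrm{Ad}(U(g))$ for a linear unitary representation $U$. Two LPSs $(\beta,\mathcal A),(\beta',\mathcal A)$ are equivalent if $\beta'_g=\gamma^{-1}\circ\beta_g\circ\gamma$ for all $g$ for some FDQC $\gamma$ (in $0$ dimensions: an inner automorphism $\mathrm{Ad}(V)$). $(\beta,\mathcal A)$ and $(\beta',\mathcal A')$ are stably equivalent ($\sim$) if there exist on-site symmetries $(\delta,\tilde{\mathcal A}),(\delta',\tilde{\mathcal A}')$ such that $(\beta\otimes\delta,\mathcal A\otimes\tilde{\mathcal A})$ and $(\beta'\otimes\delta',\mathcal A'\otimes\tilde{\mathcal A}')$ are equivalent (in particular $\mathcal A\otimes\tilde{\mathcal A}\cong\mathcal A'\otimes\tilde{\mathcal A}'$). $\mathsf{Sym}_{G,0}$ is the set of $0$-dimensional LPSs, a monoid under stacking $(\beta\otimes\beta',\mathcal A\otimes\mathcal A')$. $H^2(G,U(1))$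 is group cohomology with trivial action. *)

From HB Require Import structures.
From mathcomp Require Import all_boot all_order all_algebra all_fingroup.
From mathcomp Require Import reals.
From mathcomp Require Import complex mxtens.

Set Implicit Arguments.
Unset Strict Implicit.
Unset Printing Implicit Defensive.

Import GRing.Theory Num.Theory.
Local Open Scope ring_scope.

Section ZeroDimLPS.

Variable R : realType.
Local Notation C := (R[i]).

Definition adjmx {m n} (A : 'M[C]_(m, n)) : 'M[C]_(n, m) := (map_mx Num.conj A)^T.

Definition unitarymx {n} (U : 'M[C]_n) : Prop :=
  U *m adjmx U = 1%:M /\ adjmx U *m U = 1%:M.

Definition Ad {n} (U : 'M[C]_n) (A : 'M[C]_n) : 'M[C]_n := U *m A *m adjmx U.

Definition star_iso {n m} (f : 'M[C]_n -> 'M[C]_m) : Prop :=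
  [/\ (forall (a : C) (A B : 'M[C]_n), f (a *: A + B) = a *: f A + f B),
      (forall A B : 'M[C]_n, f (A *m B) = f A *m f B),
      f 1%:M = 1%:M,
      (forall A : 'M[C]_n, f (adjmx A) = adjmx (f A))
    & bijective f].

Variable gT : finGroupType.

(* A 0-dimensional LPS on A = B(H), H = C^n, n > 0: a group homomorphism
   beta : G -> Aut(A). *)
Definition is_LPS {n} (beta : gT -> 'M[C]_n -> 'M[C]_n) : Prop :=
  [/\ (0 < n)%N,
      (forall g, star_iso (beta g)),
      (forall A, beta 1%g A = A)
    & (forall g h A, beta (g * h)%g A = beta g (beta h A))].

Definition is_onsite {n} (beta : gT -> 'M[C]_n -> 'M[C]_n) : Prop :=
  is_LPS beta /\
  exists U : gT -> 'M[C]_n,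
    [/\ (forall g, unitarymx (U g)),
        U 1%g = 1%:M,
        (forall g h, U (g * h)%g = U g *m U h)
      & (forall g A, beta g A = Ad (U g) A)].

(* the tensor product f (x) f' of linear maps on B(C^n) and B(C^m), acting on
   B(C^n (x) C^m) = 'M_(n * m) (Kronecker product [tensmx]):
   (f (x) f') (A *t B) = f A *t f' B, extended linearly *)
Definition tens_map {n m} (f : 'M[C]_n -> 'M[C]_n) (f' : 'M[C]_m -> 'M[C]_m)
  (X : 'M[C]_(n * m)) : 'M[C]_(n * m) :=
  \sum_(i < n) \sum_(k < n) \sum_(j < m) \sum_(l < m)
     X (mxtens_index (i, j)) (mxtens_index (k, l)) *:
       tensmx (f (delta_mx i k)) (f' (delta_mx j l)).

Definition stack {n m} (beta : gT -> 'M[C]_n -> 'M[C]_n)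
  (beta' : gT -> 'M[C]_m -> 'M[C]_m) : gT -> 'M[C]_(n * m) -> 'M[C]_(n * m) :=
  fun g => tens_map (beta g) (beta' g).

(* equivalence of LPSs on (identified) algebras: beta' = gamma^-1 o beta o gamma
   with gamma = Ad(V) an inner automorphism (V unitary), where the algebras
   B(C^n) and B(C^n') are identified through a *-isomorphism iota *)
Definition LPS_equiv {n n'} (beta : gT -> 'M[C]_n -> 'M[C]_n)
  (beta' : gT -> 'M[C]_n' -> 'M[C]_n') : Prop :=
  exists (iota : 'M[C]_n -> 'M[C]_n') (V : 'M[C]_n'),
    [/\ star_iso iota, unitarymx V &
        forall g (A : 'M[C]_n),
          beta' g (Ad (adjmx V) (iota A)) = Ad (adjmx V) (iota (beta g A))].

Definition stably_equiv {n n'} (beta : gT -> 'M[C]_n -> 'M[C]_n)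
  (beta' : gT -> 'M[C]_n' -> 'M[C]_n') : Prop :=
  exists (m m' : nat) (delta : gT -> 'M[C]_m -> 'M[C]_m)
         (delta' : gT -> 'M[C]_m' -> 'M[C]_m'),
    [/\ is_onsite delta, is_onsite delta' &
        LPS_equiv (stack beta delta) (stack beta' delta')].

Definition trivial_LPS : gT -> 'M[C]_1 -> 'M[C]_1 := fun _ A => A.

(* group cohomology H^2(G, U(1)) with trivial action: U(1)-valued 2-cocycles
   modulo coboundaries, group law = pointwise product *)
Definition U1_2cocycle (w : gT -> gT -> C) : Prop :=
  (forall g h, `|w g h| = 1) /\
  (forall g h k, w h k * w g (h * k)%g = w (g * h)%g k * w g h).

Definition cohomologous (w w' : gT -> gT -> C) : Prop :=
  exists mu : gT -> C, (forall g, `|mu g| = 1) /\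
    forall g h, w' g h = w g h * (mu g * mu h / mu (g * h)%g).

Definition cocycle_mul (w w' : gT -> gT -> C) : gT -> gT -> C :=
  fun g h => w g h * w' g h.

End ZeroDimLPS.

From Pilot Require Import Defs.
From HB Require Import structures.
From mathcomp Require Import all_boot all_order all_algebra all_fingroup.
From mathcomp Require Import boolp reals complex mxtens ring.
Import Order.TTheory GRing.Theory Num.Theory.
Local Open Scope ring_scope.
Set Implicit Arguments.
Unset Strict Implicit.
Unset Printing Implicit Defensive.

(* By Skolem-Noether every *-automorphism of B(C^n) is Ad(V) for a unitary V that is
   unique up to a phase.  Hence an LPS beta lifts to a projective unitary representation
   U with beta_g = Ad(U g), whose multiplier w is a U(1) 2-cocycle (associativity of
   U g U h U k); its class Omega(beta) does not depend on the lift, multiplies under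
   stacking, and is trivial for on-site symmetries, so it is an invariant of stable
   equivalence.  Conversely, Fell absorption U (x) L ~ 1 (x) L_w, with L the left regular
   representation and L_w its twist by w, together with the equivalence of L_w and L_w'
   for cohomologous w and w', shows that two symmetries with the same class become
   equivalent after stacking regular on-site symmetries.  The representations L_w
   realise every class, and the complex conjugate of U gives an inverse, since
   U (x) conj U has multiplier w * conj w = 1. *)

Lemma sum_scale_eq (K : pzRingType) (I : finType) (V : lmodType K) (F : I -> V) i :
  \sum_j (i == j)%:R *: F j = F i.
Proof.
rewrite (bigD1 i) //= eqxx scale1r big1 ?addr0 // => j /negbTE.
by rewrite eq_sym => ->; rewrite scale0r.
Qed.

Lemma sum_scale_eqr (K : pzRingType) (I : finType) (V : lmodType K) (F : I -> V) i :
  \sum_j (j == i)%:R *: F j = F i.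
Proof. by rewrite -[RHS](sum_scale_eq F); apply: eq_bigr => j _; rewrite eq_sym. Qed.

Section MatrixRing.
Variable K : pzRingType.

Lemma mul_delta_mx_scale m n p (i : 'I_m) (j k : 'I_n) (l : 'I_p) :
  delta_mx i j *m delta_mx k l = (j == k)%:R *: (delta_mx i l : 'M[K]_(m, p)).
Proof. by rewrite mul_delta_mx_cond scaler_nat. Qed.

Lemma central_scalar_mx n (M : 'M[K]_n.+1) :
  (forall A, A *m M = M *m A) -> M = (M 0 0)%:M.
Proof.
move=> Mc; apply/matrixP=> a b.
have /matrixP/(_ 0 b) := Mc (delta_mx 0 a).
rewrite !mxE (bigD1 a) // [in RHS](bigD1 0) //= !big1 ?addr0.
- by rewrite !mxE !eqxx /= mul1r => ->; rewrite eq_sym mulr_natr.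
- by move=> k /negbTE k0; rewrite mxE k0 mulr0.
by move=> k /negbTE ka; rewrite mxE ka andbF mul0r.
Qed.

End MatrixRing.

Section Kronecker.
Variable K : comPzRingType.

Lemma mxtens_index_eq m n (i i' : 'I_m) (j j' : 'I_n) :
  (mxtens_index (i, j) == mxtens_index (i', j')) = (i == i') && (j == j').
Proof. by rewrite (can_eq (@mxtens_indexK m n)). Qed.

Lemma sum_mxtens_index (V : nmodType) m n (F : 'I_(m * n) -> V) :
  \sum_k F k = \sum_i \sum_j F (mxtens_index (i, j)).
Proof.
rewrite pair_big /=; apply: reindex => /=.
by exists (@mxtens_unindex m n) => k _; rewrite (mxtens_indexK, mxtens_unindexK) //; case: k.
Qed.

Lemma tens1mx m n : (1%:M : 'M[K]_m) *t (1%:M : 'M[K]_n) = 1%:M.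
Proof.
apply/matrixP=> a b.
case: (mxtens_indexP a) => a1 a2; case: (mxtens_indexP b) => b1 b2.
by rewrite tensmxE !mxE mxtens_index_eq -natrM mulnb.
Qed.

Lemma tensmxZl m n p q c (A : 'M[K]_(m, n)) (B : 'M[K]_(p, q)) :
  (c *: A) *t B = c *: (A *t B).
Proof. by apply/matrixP => a b; rewrite !mxE mulrA. Qed.

Lemma tensmxZr m n p q c (A : 'M[K]_(m, n)) (B : 'M[K]_(p, q)) :
  A *t (c *: B) = c *: (A *t B).
Proof. by apply/matrixP => a b; rewrite !mxE mulrCA. Qed.

Lemma tensmx_sumr m n p q I (r : seq I) (P : pred I) (A : 'M[K]_(m, n)) (F : I -> 'M[K]_(p, q)) :
  A *t (\sum_(i <- r | P i) F i) = \sum_(i <- r | P i) A *t F i.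
Proof.
apply: (big_morph (tensmx A)) => [B D|]; last exact: tensmx0.
by apply/matrixP => a b; rewrite !mxE mulrDr.
Qed.

Lemma tensmx_delta m n p q (i : 'I_m) (k : 'I_n) (j : 'I_p) (l : 'I_q) :
  delta_mx i k *t delta_mx j l =
  delta_mx (mxtens_index (i, j)) (mxtens_index (k, l)) :> 'M[K]_(m * p, n * q).
Proof.
apply/matrixP => a b.
case: (mxtens_indexP a) => a1 a2; case: (mxtens_indexP b) => b1 b2.
by rewrite tensmxE !mxE !mxtens_index_eq -natrM mulnb andbACA.
Qed.

End Kronecker.

Section Matrices.
Variable R : realType.
Local Notation C := R[i].

Lemma adjmxE m n (A : 'M[C]_(m, n)) i j : adjmx A i j = (A j i)^*.
Proof. by rewrite !mxE. Qed.

Lemma adjmxK m n (A : 'M[C]_(m, n)) : adjmx (adjmx A) = A.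
Proof. by apply/matrixP=> i j; rewrite !adjmxE conjCK. Qed.

Lemma adjmxM m n p (A : 'M[C]_(m, n)) (B : 'M[C]_(n, p)) :
  adjmx (A *m B) = adjmx B *m adjmx A.
Proof. by rewrite /adjmx map_mxM trmx_mul. Qed.

Lemma adjmxZ m n a (A : 'M[C]_(m, n)) : adjmx (a *: A) = a^* *: adjmx A.
Proof. by apply/matrixP=> i j; rewrite !(adjmxE, mxE) rmorphM. Qed.

Lemma adjmx_sum m n I (r : seq I) (P : pred I) (F : I -> 'M[C]_(m, n)) :
  adjmx (\sum_(i <- r | P i) F i) = \sum_(i <- r | P i) adjmx (F i).
Proof. by rewrite /adjmx raddf_sum linear_sum. Qed.

Lemma adjmx1 n : adjmx (1%:M : 'M[C]_n) = 1%:M.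
Proof. by rewrite /adjmx map_mx1 trmx1. Qed.

Lemma adjmx_delta m n i j : adjmx (delta_mx i j : 'M[C]_(m, n)) = delta_mx j i.
Proof. by rewrite /adjmx map_delta_mx trmx_delta. Qed.

Lemma adjmx_tens m n p q (A : 'M[C]_(m, n)) (B : 'M[C]_(p, q)) :
  adjmx (A *t B) = adjmx A *t adjmx B.
Proof. by rewrite /adjmx map_mxT trmx_tens. Qed.

Lemma norm1_conjMl (c : C) : `|c| = 1 -> c^* * c = 1.
Proof. by move=> c1; rewrite -normCKC c1 expr1n. Qed.

Lemma norm1_conjMr (c : C) : `|c| = 1 -> c * c^* = 1.
Proof. by move=> c1; rewrite -normCK c1 expr1n. Qed.

Lemma conjMl_norm1 (c : C) : c^* * c = 1 -> `|c| = 1.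
Proof. by move=> cc1; apply/eqP; rewrite -sqrp_eq1 ?normr_ge0 // normCKC cc1. Qed.

Lemma norm1_neq0 (c : C) : `|c| = 1 -> c != 0.
Proof. by move=> c1; rewrite -normr_eq0 c1 oner_neq0. Qed.

Definition unitary m n (Y : 'M[C]_(m, n)) :=
  adjmx Y *m Y = 1%:M /\ Y *m adjmx Y = 1%:M.

Lemma unitarymxE n (U : 'M[C]_n) : Defs.unitarymx U <-> unitary U.
Proof. by split; case. Qed.

Lemma unitary1 n : unitary (1%:M : 'M[C]_n).
Proof. by split; rewrite adjmx1 mulmx1. Qed.

Lemma unitary_adj m n (Y : 'M[C]_(m, n)) : unitary Y -> unitary (adjmx Y).
Proof. by case=> YY1 YY2; split; rewrite adjmxK. Qed.

Lemma unitaryM m n p (Y : 'M[C]_(m, n)) (Z : 'M[C]_(n, p)) :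
  unitary Y -> unitary Z -> unitary (Y *m Z).
Proof.
case=> Y1 Y2 [Z1 Z2]; split; rewrite adjmxM.
  by rewrite mulmxA -(mulmxA (adjmx Z)) Y1 mulmx1 Z1.
by rewrite mulmxA -(mulmxA Y) Z2 mulmx1 Y2.
Qed.

Lemma unitary_tens m n p q (Y : 'M[C]_(m, n)) (Z : 'M[C]_(p, q)) :
  unitary Y -> unitary Z -> unitary (Y *t Z).
Proof.
by case=> Y1 Y2 [Z1 Z2]; split; rewrite adjmx_tens tensmx_mul ?Y1 ?Z1 ?Y2 ?Z2 tens1mx.
Qed.

Lemma unitary_conj n (U : 'M[C]_n) : unitary U -> unitary (map_mx Num.conj U).
Proof.
have adj_conj : adjmx (map_mx Num.conj U) = map_mx Num.conj (adjmx U).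
  by apply/matrixP=> i j; rewrite !(adjmxE, mxE).
by case=> U1 U2; split; rewrite adj_conj -map_mxM ?U1 ?U2 map_mx1.
Qed.

Lemma unitary_scale_inj n (X : 'M[C]_n.+1) a b :
  unitary X -> a *: X = b *: X -> a = b.
Proof.
case=> X1 _ /(congr1 (mulmx (adjmx X))).
by rewrite -!scalemxAr X1 => /matrixP/(_ 0 0); rewrite !mxE eqxx !mulr1.
Qed.

(* [Ad] for a rectangular [Y]: a *-isomorphism B(C^n) -> B(C^N) is a priori between
   algebras of different sizes. *)
Definition Adr m n (Y : 'M[C]_(m, n)) (A : 'M[C]_n) : 'M[C]_m := Y *m A *m adjmx Y.

Lemma Ad_Adr n (U : 'M[C]_n) : Ad U =1 Adr U.
Proof. by []. Qed.

Lemma AdrM m n p (Y : 'M[C]_(m, n)) (Z : 'M[C]_(n, p)) A :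
  Adr (Y *m Z) A = Adr Y (Adr Z A).
Proof. by rewrite /Adr adjmxM !mulmxA. Qed.

Lemma Adr1 n (A : 'M[C]_n) : Adr 1%:M A = A.
Proof. by rewrite /Adr adjmx1 mul1mx mulmx1. Qed.

Lemma Adr_norm1Z m n c (Y : 'M[C]_(m, n)) A : `|c| = 1 -> Adr (c *: Y) A = Adr Y A.
Proof.
move=> c1; rewrite /Adr adjmxZ -!scalemxAl -scalemxAr scalerA.
by rewrite norm1_conjMr // scale1r.
Qed.

Lemma AdrZ m n (Y : 'M[C]_(m, n)) c A : Adr Y (c *: A) = c *: Adr Y A.
Proof. by rewrite /Adr -scalemxAr -scalemxAl. Qed.

Lemma Adr_sum m n (Y : 'M[C]_(m, n)) I (r : seq I) (P : pred I) F :
  Adr Y (\sum_(i <- r | P i) F i) = \sum_(i <- r | P i) Adr Y (F i).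
Proof. by rewrite /Adr mulmx_sumr mulmx_suml. Qed.

Lemma Adr_tens m n p q (Y : 'M[C]_(m, n)) (Z : 'M[C]_(p, q)) A B :
  Adr (Y *t Z) (A *t B) = Adr Y A *t Adr Z B.
Proof. by rewrite /Adr adjmx_tens !tensmx_mul. Qed.

Lemma tens_map_Adr m n (f : 'M[C]_m -> 'M[C]_m) (f' : 'M[C]_n -> 'M[C]_n) Y Y' :
  f =1 Adr Y -> f' =1 Adr Y' -> tens_map f f' =1 Adr (Y *t Y').
Proof.
move=> fY fY' X; rewrite {2}(matrix_sum_delta X) Adr_sum sum_mxtens_index /tens_map.
apply: eq_bigr => i _; rewrite exchange_big; apply: eq_bigr => j _.
rewrite Adr_sum sum_mxtens_index; apply: eq_bigr => k _; apply: eq_bigr => l _.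
by rewrite AdrZ fY fY' -Adr_tens tensmx_delta.
Qed.

Lemma star_iso_Adr m n (Y : 'M[C]_(m, n)) : unitary Y -> star_iso (Adr Y).
Proof.
case=> Y1 Y2; split.
- by move=> a A B; rewrite /Adr mulmxDr mulmxDl -scalemxAr -scalemxAl.
- by move=> A B; rewrite /Adr !mulmxA -(mulmxA _ (adjmx Y)) Y1 mulmx1.
- by rewrite /Adr mulmx1 Y2.
- by move=> A; rewrite /Adr !adjmxM adjmxK mulmxA.
exists (Adr (adjmx Y)) => A; rewrite -AdrM ?adjmxK ?Y1 ?Y2 Adr1 //.
Qed.

Lemma Adr_eq_phase n (X Y : 'M[C]_n.+1) :
  unitary X -> unitary Y -> Adr X =1 Adr Y -> exists c, `|c| = 1 /\ Y = c *: X.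
Proof.
move=> [X1 X2] uY XY.
pose M := adjmx X *m Y.
have M_central A : A *m M = M *m A.
  have := congr1 (fun B => adjmx X *m B *m Y) (XY A); rewrite /Adr /=.
  by rewrite !mulmxA X1 mul1mx -!mulmxA (proj1 uY) mulmx1 => ->; rewrite /M !mulmxA.
have YE : Y = M 0 0 *: X.
  by rewrite -mul_mx_scalar -central_scalar_mx // /M mulmxA X2 mul1mx.
exists (M 0 0); split => //; apply: conjMl_norm1.
case: uY => + _; rewrite YE adjmxZ -scalemxAl -scalemxAr scalerA X1.
by move/matrixP/(_ 0 0); rewrite !mxE eqxx !mulr1n mulr1.
Qed.

(** * The Skolem-Noether theorem *)

Section LinearMap.
Variables (m n : nat) (f : 'M[C]_m -> 'M[C]_n).
Hypothesis f_lin : forall a A B, f (a *: A + B) = a *: f A + f B.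

Lemma lin_map0 : f 0 = 0.
Proof.
have := f_lin 1 0 0; rewrite !scale1r addr0 => f00.
by apply: (addrI (f 0)); rewrite -f00 addr0.
Qed.

Lemma lin_mapD A B : f (A + B) = f A + f B.
Proof. by have := f_lin 1 A B; rewrite !scale1r. Qed.

Lemma lin_mapZ a A : f (a *: A) = a *: f A.
Proof. by rewrite -[_ *: A]addr0 f_lin lin_map0 addr0. Qed.

Lemma lin_map_expand A : f A = \sum_i \sum_j A i j *: f (delta_mx i j).
Proof.
rewrite {1}(matrix_sum_delta A) (big_morph f lin_mapD lin_map0); apply: eq_bigr => i _.
by rewrite (big_morph f lin_mapD lin_map0); apply: eq_bigr => j _; rewrite lin_mapZ.
Qed.

End LinearMap.

Lemma cV_normalize N (x : 'cV[C]_N) : x != 0 -> exists c, adjmx (c *: x) *m (c *: x) = 1%:M.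
Proof.
move=> x0; have [i xi0] : exists i, x i 0 != 0.
  apply/existsP; apply: contraNT x0 => /existsPn x_i0.
  by apply/eqP/matrixP => i j; rewrite [j]ord1 mxE; apply/eqP/negbNE.
set s := (adjmx x *m x) 0 0.
have s_gt0 : 0 < s.
  have -> : s = \sum_j `|x j 0| ^+ 2.
    by rewrite /s mxE; apply: eq_bigr => j _; rewrite adjmxE normCKC.
  rewrite (bigD1 i) //= ltr_wpDr ?sumr_ge0 // => [j _|]; first exact: exprn_ge0.
  by rewrite exprn_gt0 // normr_gt0.
exists (sqrtC s)^-1.
rewrite adjmxZ -scalemxAl -scalemxAr scalerA [adjmx x *m x]mx11_scalar -/s.
have [s_ge0 s_neq0] := (ltW s_gt0, lt0r_neq0 s_gt0).
by rewrite scale_scalar_mx geC0_conj ?invr_ge0 ?sqrtC_ge0 // -invfM -expr2 sqrtCK mulVf.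
Qed.

Lemma exists_unit_vector N (Q : 'M[C]_N) :
  Q *m Q = Q -> Q != 0 -> exists v : 'cV_N, adjmx v *m v = 1%:M /\ Q *m v = v.
Proof.
move=> QQ Q0; have [k Qk0] : exists k, col k Q != 0.
  apply/existsP; apply: contraNT Q0 => /existsPn Q_k0.
  by apply/eqP/matrixP => i k; have /negbNE/eqP/matrixP/(_ i 0) := Q_k0 k; rewrite !mxE.
have [c v1] := cV_normalize Qk0.
by exists (c *: col k Q); split; rewrite // -scalemxAr colE mulmxA QQ.
Qed.

Section Construction.
Variables (n N : nat) (f : 'M[C]_n.+1 -> 'M[C]_N.+1).
Hypothesis f_star : star_iso f.

Let f_lin a A B : f (a *: A + B) = a *: f A + f B. Proof. by case: f_star. Qed.
Let fM A B : f (A *m B) = f A *m f B. Proof. by case: f_star. Qed.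
Let f_adj A : f (adjmx A) = adjmx (f A). Proof. by case: f_star. Qed.
Let f_bij : bijective f. Proof. by case: f_star. Qed.

Lemma star_iso_deltaM i j k l :
  f (delta_mx i j) *m f (delta_mx k l) = (j == k)%:R *: f (delta_mx i l).
Proof. by rewrite -fM mul_delta_mx_scale lin_mapZ. Qed.

Let P := f (delta_mx 0 0).

Lemma star_iso_delta00_idem : P *m P = P.
Proof. by rewrite star_iso_deltaM eqxx scale1r. Qed.

Lemma star_iso_delta00_neq0 : P != 0.
Proof.
apply: contra_neq (oner_neq0 C) => P0.
have /matrixP/(_ 0 0) : delta_mx 0 0 = 0 :> 'M[C]_n.+1.
  by apply: (bij_inj f_bij); rewrite -/P P0 lin_map0.
by rewrite !mxE !eqxx.
Qed.

Variable v : 'cV[C]_N.+1.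
Hypotheses (v_unit : adjmx v *m v = 1%:M) (Pv : P *m v = v).

(* The intertwiner sends e_i to f(E_i0) v, where v is a unit vector in the range of the
   rank-one projection P = f(E_00). *)
Definition sn_mx : 'M[C]_(N.+1, n.+1) := \sum_i f (delta_mx i 0) *m v *m delta_mx 0 i.

Lemma sn_mx_isometry : adjmx sn_mx *m sn_mx = 1%:M.
Proof.
have termM i j : adjmx (f (delta_mx i 0) *m v *m delta_mx 0 i) *m
    (f (delta_mx j 0) *m v *m delta_mx 0 j) = (i == j)%:R *: delta_mx i j.
  rewrite !adjmxM -f_adj !adjmx_delta.
  rewrite !mulmxA -(mulmxA _ (f (delta_mx 0 i))) star_iso_deltaM -/P.
  rewrite -scalemxAr -!scalemxAl -(mulmxA _ P) Pv -(mulmxA _ (adjmx v)) v_unit.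
  by rewrite mulmx1 mul_delta_mx.
rewrite /sn_mx adjmx_sum mulmx_suml mx1_sum_delta; apply: eq_bigr => i _.
by rewrite mulmx_sumr; under eq_bigr => j _ do rewrite termM; rewrite sum_scale_eq.
Qed.

Lemma sn_mx_intertwine A : f A *m sn_mx = sn_mx *m A.
Proof.
have deltaE a b : f (delta_mx a b) *m sn_mx = sn_mx *m delta_mx a b.
  rewrite /sn_mx mulmx_sumr mulmx_suml.
  under eq_bigr => i _ do rewrite !mulmxA star_iso_deltaM -!scalemxAl.
  under [RHS]eq_bigr => i _ do rewrite -mulmxA mul_delta_mx_scale -scalemxAr.
  by rewrite sum_scale_eq sum_scale_eqr.
rewrite (lin_map_expand f_lin A) {2}(matrix_sum_delta A) mulmx_suml mulmx_sumr.
apply: eq_bigr => a _; rewrite mulmx_suml mulmx_sumr; apply: eq_bigr => b _.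
by rewrite -scalemxAl -scalemxAr deltaE.
Qed.

Lemma sn_mx_coisometry : sn_mx *m adjmx sn_mx = 1%:M.
Proof.
have adj_intertwine A : adjmx sn_mx *m f A = A *m adjmx sn_mx.
  by have := congr1 (@adjmx R _ _) (sn_mx_intertwine (adjmx A)); rewrite !adjmxM f_adj !adjmxK.
pose Q := sn_mx *m adjmx sn_mx.
have QE : Q = (Q 0 0)%:M.
  apply: central_scalar_mx => B; have [g fK gK] := f_bij.
  by rewrite -(gK B) /Q mulmxA sn_mx_intertwine -mulmxA -adj_intertwine mulmxA.
have : adjmx sn_mx *m Q *m sn_mx = 1%:M.
  by rewrite /Q !mulmxA sn_mx_isometry mul1mx sn_mx_isometry.
move: QE; set c := Q 0 0 => QE.
rewrite QE mul_mx_scalar -scalemxAl sn_mx_isometry => /matrixP/(_ 0 0).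
by rewrite !mxE eqxx mulr1 -/Q => c1; rewrite -/Q QE c1.
Qed.

End Construction.

Theorem star_iso_inner n N (f : 'M[C]_n.+1 -> 'M[C]_N) :
  star_iso f -> exists Y : 'M[C]_(N, n.+1), unitary Y /\ f =1 Adr Y.
Proof.
case: N f => [|N] f f_star.
  have /matrixP/(_ 0 0) : delta_mx 0 0 = 0 :> 'M[C]_n.+1.
    by case: f_star => _ _ _ _ /bij_inj; apply; apply/matrixP => [[]].
  by rewrite !mxE !eqxx => /eqP; rewrite oner_eq0.
have [v [v_unit Pv]] :=
  exists_unit_vector (star_iso_delta00_idem f_star) (star_iso_delta00_neq0 f_star).
have Y2 := sn_mx_coisometry f_star v_unit Pv.
exists (sn_mx f v); split=> [|A]; first by split; [apply: sn_mx_isometry|].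
by rewrite /Adr -sn_mx_intertwine // -mulmxA Y2 mulmx1.
Qed.

End Matrices.

Section Symmetries.
Variables (R : realType) (gT : finGroupType).
Local Notation C := R[i].

(** * Projective unitary lifts and the invariant Omega *)

Definition projective_rep n (U : gT -> 'M[C]_n) (w : gT -> gT -> C) :=
  forall g h, U g *m U h = w g h *: U (g * h)%g.

Lemma projective_rep_tens m n (U : gT -> 'M[C]_m) (V : gT -> 'M[C]_n) w w' :
  projective_rep U w -> projective_rep V w' ->
  projective_rep (fun g => U g *t V g) (cocycle_mul w w').
Proof. by move=> Uw Vw g h; rewrite tensmx_mul Uw Vw tensmxZl tensmxZr scalerA. Qed.

Lemma projective_rep_cocycle n (U : gT -> 'M[C]_n.+1) w :
  (forall g, unitary (U g)) -> projective_rep U w -> U1_2cocycle w.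
Proof.
move=> uU Uw; split=> [g h|g h k].
  apply: conjMl_norm1; apply: (unitary_scale_inj (unitary1 R n.+1)).
  have [+ _] := unitaryM (uU g) (uU h).
  by rewrite Uw adjmxZ -scalemxAl -scalemxAr scalerA (proj1 (uU _)) scale1r.
apply: (unitary_scale_inj (uU (g * h * k)%g)).
rewrite [in RHS]mulrC -!scalerA -[in LHS]mulgA -!Uw.
by rewrite [in LHS]scalemxAr [in RHS]scalemxAl -!Uw mulmxA.
Qed.

Lemma cohomologous_sym (w w' : gT -> gT -> C) : cohomologous w w' -> cohomologous w' w.
Proof.
case=> mu [mu1 ww']; exists (fun g => (mu g)^-1); split => [g|g h].
  by rewrite normfV mu1 invr1.
have := norm1_neq0 (mu1 g); have := norm1_neq0 (mu1 h); have := norm1_neq0 (mu1 (g * h)%g).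
by rewrite ww' => mugh muh mug; field; rewrite mug muh mugh.
Qed.

Definition unitary_lift n (beta : gT -> 'M[C]_n -> 'M[C]_n) (U : gT -> 'M[C]_n) w :=
  [/\ forall g, unitary (U g), forall g, beta g =1 Adr (U g) & projective_rep U w].

Lemma exists_unitary_lift n (beta : gT -> 'M[C]_n -> 'M[C]_n) :
  is_LPS beta -> exists U w, unitary_lift beta U w.
Proof.
case: n beta => [|n] beta [] // _ beta_star _ betaM.
have [U UP] := choice (fun g => star_iso_inner (beta_star g)).
have uU g : unitary (U g) by case: (UP g).
have betaU g : beta g =1 Adr (U g) by case: (UP g).
have phase (p : gT * gT) : exists c, U p.1 *m U p.2 = c *: U (p.1 * p.2)%g.
  have [|c [_ ->]] // := Adr_eq_phase (uU (p.1 * p.2)%g) (unitaryM (uU p.1) (uU p.2)).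
    by move=> A; rewrite AdrM -!betaU betaM.
  by exists c.
have [w wP] := choice phase.
by exists U, (fun g h => w (g, h)); split => // g h; apply: (wP (g, h)).
Qed.

Lemma unitary_lift_cohomologous n (beta : gT -> 'M[C]_n.+1 -> 'M[C]_n.+1) U U' w w' :
  unitary_lift beta U w -> unitary_lift beta U' w' -> cohomologous w w'.
Proof.
move=> [uU betaU Uw] [uU' betaU' U'w'].
have phase g : exists c, `|c| = 1 /\ U' g = c *: U g.
  by apply: Adr_eq_phase => // A; rewrite -betaU betaU'.
have [mu muP] := choice phase.
exists mu; split => [g|g h]; first by case: (muP g).
have [[_ Eg] [_ Eh] [mu1 Egh]] := And3 (muP g) (muP h) (muP (g * h)%g).
apply: (mulIf (norm1_neq0 mu1)); rewrite mulrA divfK ?norm1_neq0 //.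
apply: (unitary_scale_inj (uU (g * h)%g)).
by rewrite -[LHS]scalerA -Egh -U'w' Eg Eh -scalemxAl -scalemxAr Uw !scalerA; congr (_ *: _); ring.
Qed.

Lemma unitary_lift_stack m n (beta : gT -> 'M[C]_m -> 'M[C]_m) (beta' : gT -> 'M[C]_n -> 'M[C]_n)
    U U' w w' :
  unitary_lift beta U w -> unitary_lift beta' U' w' ->
  unitary_lift (stack beta beta') (fun g => U g *t U' g) (cocycle_mul w w').
Proof.
case=> uU betaU Uw [uU' betaU' U'w']; split=> [g|g|].
- exact: unitary_tens.
- exact: tens_map_Adr.
exact: projective_rep_tens.
Qed.

(* The multiplier of some unitary lift of [beta], or the junk value 1 when there is none. *)
Definition Omega n (beta : gT -> 'M[C]_n -> 'M[C]_n) : gT -> gT -> C :=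
  if pselect (exists w U, unitary_lift beta U w) is left lifts then proj1_sig (cid lifts)
  else fun _ _ => 1.

Lemma Omega_liftP n (beta : gT -> 'M[C]_n -> 'M[C]_n) :
  (exists U w, unitary_lift beta U w) -> exists U, unitary_lift beta U (Omega beta).
Proof.
move=> [U [w Uw]]; rewrite /Omega.
by case: pselect => [lifts|[]]; [exact: proj2_sig (cid lifts) | exists w, U].
Qed.

Lemma Omega_lift n (beta : gT -> 'M[C]_n -> 'M[C]_n) :
  is_LPS beta -> exists U, unitary_lift beta U (Omega beta).
Proof. by move/exists_unitary_lift/Omega_liftP. Qed.

Lemma Omega_cohomologous n (beta : gT -> 'M[C]_n -> 'M[C]_n) U w :
  (0 < n)%N -> unitary_lift beta U w -> cohomologous (Omega beta) w.
Proof.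
case: n beta U => // n beta U _ Uw.
have [U' U'lift] := Omega_liftP (ex_intro _ U (ex_intro _ w Uw)).
exact: unitary_lift_cohomologous U'lift Uw.
Qed.

Lemma Omega_cocycle n (beta : gT -> 'M[C]_n -> 'M[C]_n) :
  is_LPS beta -> U1_2cocycle (Omega beta).
Proof.
case: n beta => [|n] beta beta_LPS; first by case: beta_LPS.
by have [U [uU _ UOmega]] := Omega_lift beta_LPS; apply: projective_rep_cocycle UOmega.
Qed.

Lemma is_LPS_Adr n (U : gT -> 'M[C]_n) w :
  (0 < n)%N -> (forall g, unitary (U g)) -> projective_rep U w ->
  is_LPS (fun g => Adr (U g)).
Proof.
case: n U => // n U _ uU Uw; have [w1 _] := projective_rep_cocycle uU Uw.
split=> // [g|A|g h A]; first exact: star_iso_Adr.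
  have U1 : U 1%g = w 1%g 1%g *: 1%:M.
    have [U11 _] := uU 1%g.
    have := congr1 (mulmx (adjmx (U 1%g))) (Uw 1%g 1%g).
    by rewrite mulmxA U11 mul1mx mulg1 -scalemxAr U11.
  by rewrite U1 Adr_norm1Z // Adr1.
by rewrite -AdrM Uw Adr_norm1Z.
Qed.

Definition phase_equiv m n (S : gT -> 'M[C]_m) (T : gT -> 'M[C]_n) :=
  exists (Z : 'M[C]_(n, m)) (phi : gT -> C),
    unitary Z /\ forall g, `|phi g| = 1 /\ T g *m Z = phi g *: (Z *m S g).

Lemma phase_equiv_refl n (S : gT -> 'M[C]_n) : phase_equiv S S.
Proof.
exists 1%:M, (fun=> 1); split=> [|g]; first exact: unitary1.
by rewrite normr1 scale1r mulmx1 mul1mx.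
Qed.

Lemma phase_equiv_sym m n (S : gT -> 'M[C]_m) (T : gT -> 'M[C]_n) :
  phase_equiv S T -> phase_equiv T S.
Proof.
case=> Z [phi [[Z1 Z2] phiP]]; exists (adjmx Z), (fun g => (phi g)^*).
split=> [|g]; first exact: unitary_adj.
have [phi1 TZ] := phiP g; split; first by rewrite norm_conjC.
have := congr1 (fun M => adjmx Z *m M *m adjmx Z) TZ.
rewrite /= -!mulmxA Z2 mulmx1 -scalemxAl -scalemxAr !mulmxA Z1 mul1mx => ->.
by rewrite scalerA norm1_conjMl // scale1r.
Qed.

Lemma phase_equiv_trans m n p (S : gT -> 'M[C]_m) (T : gT -> 'M[C]_n) (V : gT -> 'M[C]_p) :
  phase_equiv S T -> phase_equiv T V -> phase_equiv S V.
Proof.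
case=> Z [phi [uZ phiP]] [Z' [phi' [uZ' phi'P]]].
exists (Z' *m Z), (fun g => phi' g * phi g); split=> [|g]; first exact: unitaryM.
have [[phi1 TZ] [phi'1 VZ']] := (phiP g, phi'P g); split; first by rewrite normrM phi1 phi'1 mulr1.
by rewrite mulmxA VZ' -scalemxAl -mulmxA TZ -scalemxAr scalerA mulmxA.
Qed.

Lemma phase_equiv_tens m n p q (S : gT -> 'M[C]_m) (T : gT -> 'M[C]_n)
    (S' : gT -> 'M[C]_p) (T' : gT -> 'M[C]_q) :
  phase_equiv S T -> phase_equiv S' T' ->
  phase_equiv (fun g => S g *t S' g) (fun g => T g *t T' g).
Proof.
case=> Z [phi [uZ phiP]] [Z' [phi' [uZ' phi'P]]].
exists (Z *t Z'), (fun g => phi g * phi' g); split=> [|g]; first exact: unitary_tens.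
have [[phi1 TZ] [phi'1 TZ']] := (phiP g, phi'P g); split; first by rewrite normrM phi1 phi'1 mulr1.
by rewrite !tensmx_mul TZ TZ' tensmxZl tensmxZr scalerA.
Qed.

Lemma phase_equiv_reindex m n (S : gT -> 'M[C]_m) (T : gT -> 'M[C]_n)
    (s : 'I_n -> 'I_m) (t : 'I_m -> 'I_n) :
  cancel s t -> cancel t s -> (forall g a c, T g a (t c) = S g (s a) c) ->
  phase_equiv S T.
Proof.
move=> st ts TS; pose Z : 'M[C]_(n, m) := rowsub s 1%:M.
have ZE : Z = colsub t 1%:M.
  by apply/matrixP => a b; rewrite !mxE -(can_eq ts) st eq_sym.
have adjZ : adjmx Z = rowsub t 1%:M.
  by apply/matrixP => a b; rewrite !mxE rmorph_nat -(can_eq ts) st eq_sym.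
exists Z, (fun=> 1); split=> [|g].
  by split; rewrite adjZ; apply/matrixP => a b; rewrite mul_rowsub_mx mul1mx !mxE ?st ?ts.
split; first exact: normr1.
rewrite scale1r {1}ZE mulmx_colsub mulmx1 -rowsubE; apply/matrixP => a c.
by rewrite !mxE TS.
Qed.

Definition mxtens_swap m n (k : 'I_(m * n)) : 'I_(n * m) :=
  mxtens_index ((mxtens_unindex k).2, (mxtens_unindex k).1).

Lemma mxtens_swapK m n : cancel (@mxtens_swap m n) (@mxtens_swap n m).
Proof. by move=> k; case: (mxtens_indexP k) => i j; rewrite /mxtens_swap !mxtens_indexK. Qed.

Lemma phase_equiv_tensC m n (A : gT -> 'M[C]_m) (B : gT -> 'M[C]_n) :
  phase_equiv (fun g => A g *t B g) (fun g => B g *t A g).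
Proof.
apply: (phase_equiv_reindex (s := @mxtens_swap n m) (t := @mxtens_swap m n))
  => [||g a c]; try exact: mxtens_swapK.
case: (mxtens_indexP a) => j i; case: (mxtens_indexP c) => k l.
by rewrite /mxtens_swap !mxtens_indexK /= !tensmxE mulrC.
Qed.

Definition mxtens_assoc m n p (k : 'I_(m * (n * p))) : 'I_(m * n * p) :=
  let: (i, jk) := mxtens_unindex k in let: (j, l) := mxtens_unindex jk in
  mxtens_index (mxtens_index (i, j), l).

Definition mxtens_unassoc m n p (k : 'I_(m * n * p)) : 'I_(m * (n * p)) :=
  let: (ij, l) := mxtens_unindex k in let: (i, j) := mxtens_unindex ij in
  mxtens_index (i, mxtens_index (j, l)).

Lemma mxtens_assocK m n p : cancel (@mxtens_assoc m n p) (@mxtens_unassoc m n p).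
Proof.
move=> k; case: (mxtens_indexP k) => i jl; case: (mxtens_indexP jl) => j l.
by rewrite /mxtens_assoc /mxtens_unassoc !mxtens_indexK.
Qed.

Lemma mxtens_unassocK m n p : cancel (@mxtens_unassoc m n p) (@mxtens_assoc m n p).
Proof.
move=> k; case: (mxtens_indexP k) => ij l; case: (mxtens_indexP ij) => i j.
by rewrite /mxtens_assoc /mxtens_unassoc !mxtens_indexK.
Qed.

Lemma phase_equiv_tensA m n p (A : gT -> 'M[C]_m) (B : gT -> 'M[C]_n) (D : gT -> 'M[C]_p) :
  phase_equiv (fun g => A g *t B g *t D g) (fun g => A g *t (B g *t D g)).
Proof.
apply: (phase_equiv_reindex (@mxtens_assocK m n p) (@mxtens_unassocK m n p)) => g a c.
case: (mxtens_indexP a) => i jl; case: (mxtens_indexP jl) => j l.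
case: (mxtens_indexP c) => i'j' l'; case: (mxtens_indexP i'j') => i' j'.
by rewrite /mxtens_assoc /mxtens_unassoc !mxtens_indexK !tensmxE mulrA.
Qed.

Lemma LPS_equiv_phase_equiv m n (beta : gT -> 'M[C]_m -> 'M[C]_m)
    (beta' : gT -> 'M[C]_n -> 'M[C]_n) S T :
  phase_equiv S T -> (forall g, beta g =1 Adr (S g)) -> (forall g, beta' g =1 Adr (T g)) ->
  LPS_equiv beta beta'.
Proof.
case=> Z [phi [uZ phiP]] betaS beta'T.
exists (Adr Z), 1%:M; split; [exact: star_iso_Adr | exact/unitarymxE/unitary1 |].
move=> g A; rewrite !Ad_Adr adjmx1 !Adr1 betaS beta'T -!AdrM.
by have [phi1 ->] := phiP g; rewrite Adr_norm1Z.
Qed.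

Lemma cohomologous_LPS_equiv m n (beta : gT -> 'M[C]_m -> 'M[C]_m)
    (beta' : gT -> 'M[C]_n -> 'M[C]_n) S T w w' :
  (0 < m)%N -> unitary_lift beta S w -> unitary_lift beta' T w' ->
  LPS_equiv beta beta' -> cohomologous w w'.
Proof.
case: m beta S => // m beta S _ Sw [uT beta'T Tw'] [iota [V [iota_star /unitarymxE uV iotaE]]].
have [Y [uY iotaY]] := star_iso_inner iota_star.
pose Z := adjmx V *m Y.
have uZ : unitary Z by apply: unitaryM => //; apply: unitary_adj.
have intertwine g A : Adr (T g) (Adr Z A) = Adr Z (beta g A).
  by have := iotaE g A; rewrite !Ad_Adr !iotaY -!AdrM beta'T -AdrM.
clearbody Z; have [Z1 Z2] := uZ.
have Qlift : unitary_lift beta (fun g => adjmx Z *m T g *m Z) w'.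
  split=> [g|g A|g h].
  - by rewrite -mulmxA; exact: unitaryM (unitary_adj uZ) (unitaryM (uT g) uZ).
  - by rewrite !AdrM intertwine -AdrM Z1 Adr1.
  - by rewrite !mulmxA -(mulmxA _ Z) Z2 mulmx1 -(mulmxA _ (T g)) Tw' -scalemxAr -!scalemxAl.
exact: unitary_lift_cohomologous Sw Qlift.
Qed.

(** * Twisted regular representations and Fell absorption *)

Local Notation E x y := (delta_mx (enum_rank x) (enum_rank y) : 'M[C]_#|gT|).

Lemma gdeltaM x y z t : E x y *m E z t = (y == z)%:R *: E x t.
Proof. by rewrite mul_delta_mx_scale (inj_eq enum_rank_inj). Qed.

Lemma sum_gdelta_diag : \sum_x E x x = 1%:M.
Proof.
rewrite mx1_sum_delta (reindex enum_rank) //=.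
by exists enum_val => i _; rewrite (enum_rankK, enum_valK).
Qed.

Definition gdiag (d : gT -> C) : 'M[C]_#|gT| := \sum_x d x *: E x x.

Definition regmx (g : gT) : 'M[C]_#|gT| := \sum_x E (g * x)%g x.

Lemma gdiag_deltaMl d x y : gdiag d *m E x y = d x *: E x y.
Proof.
rewrite /gdiag mulmx_suml; under eq_bigr => z _ do rewrite -scalemxAl gdeltaM scalerA.
by rewrite -(sum_scale_eqr (fun z => d z *: E z y) x); apply: eq_bigr => z _; rewrite scalerA mulrC.
Qed.

Lemma regmx_deltaM g x y : regmx g *m E x y = E (g * x)%g y.
Proof.
rewrite /regmx mulmx_suml; under eq_bigr => z _ do rewrite gdeltaM.
exact: (sum_scale_eqr (fun z => E (g * z)%g y)).
Qed.

Lemma deltaM_regmx g x y : E x (g * y)%g *m regmx g = E x y.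
Proof.
rewrite /regmx mulmx_sumr; under eq_bigr => z _ do rewrite gdeltaM (inj_eq (mulgI g)).
exact: (sum_scale_eq (fun z => E x z)).
Qed.

Lemma gdiagM d d' : gdiag d *m gdiag d' = gdiag (fun x => d x * d' x).
Proof.
rewrite {2}/gdiag mulmx_sumr; apply: eq_bigr => x _.
by rewrite -scalemxAr gdiag_deltaMl scalerA mulrC.
Qed.

Lemma adjmx_gdiag d : adjmx (gdiag d) = gdiag (fun x => (d x)^*).
Proof. by rewrite /gdiag adjmx_sum; apply: eq_bigr => x _; rewrite adjmxZ adjmx_delta. Qed.

Lemma gdiag1 : gdiag (fun=> 1) = 1%:M.
Proof. by rewrite -sum_gdelta_diag; apply: eq_bigr => x _; rewrite scale1r. Qed.

Lemma gdiagZ c d : gdiag (fun x => c * d x) = c *: gdiag d.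
Proof. by rewrite /gdiag scaler_sumr; apply: eq_bigr => x _; rewrite scalerA. Qed.

Lemma gdiag_unitary d : (forall x, `|d x| = 1) -> unitary (gdiag d).
Proof.
move=> d1; split; rewrite adjmx_gdiag gdiagM -gdiag1; congr gdiag; apply: funext => x.
  exact: norm1_conjMl.
exact: norm1_conjMr.
Qed.

Lemma regmxM g h : regmx g *m regmx h = regmx (g * h)%g.
Proof.
rewrite {2}/regmx mulmx_sumr; apply: eq_bigr => x _.
by rewrite regmx_deltaM mulgA.
Qed.

Lemma regmx1 : regmx 1%g = 1%:M.
Proof. by rewrite -sum_gdelta_diag; apply: eq_bigr => x _; rewrite mul1g. Qed.

Lemma adjmx_regmx g : adjmx (regmx g) = regmx g^-1.
Proof.
rewrite /regmx adjmx_sum [RHS](reindex_inj (mulgI g)) /=.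
by apply: eq_bigr => x _; rewrite mulKg adjmx_delta.
Qed.

Lemma regmx_unitary g : unitary (regmx g).
Proof. by split; rewrite adjmx_regmx regmxM ?mulVg ?mulgV regmx1. Qed.

Lemma gdiag_regmx d g : gdiag d *m regmx g = regmx g *m gdiag (fun x => d (g * x)%g).
Proof.
rewrite {1}/regmx {2}/gdiag mulmx_sumr mulmx_sumr; apply: eq_bigr => x _.
by rewrite gdiag_deltaMl -scalemxAr regmx_deltaM.
Qed.

Definition twisted_regmx (w : gT -> gT -> C) g := regmx g *m gdiag (w g).

Lemma twisted_regmx_unitary w :
  (forall g h, `|w g h| = 1) -> forall g, unitary (twisted_regmx w g).
Proof. by move=> w1 g; apply: unitaryM; [apply: regmx_unitary | apply: gdiag_unitary]. Qed.

Lemma twisted_regmx_projective w :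
  (forall g h k, w h k * w g (h * k)%g = w (g * h)%g k * w g h) ->
  projective_rep (twisted_regmx w) w.
Proof.
move=> w_cocycle g h; rewrite /twisted_regmx mulmxA -(mulmxA (regmx g)) gdiag_regmx.
rewrite mulmxA regmxM -mulmxA gdiagM scalemxAr -gdiagZ.
by congr (_ *m gdiag _); apply: funext => x; rewrite mulrC w_cocycle mulrC.
Qed.

Lemma twisted_regmx_deltaM w g x : twisted_regmx w g *m E x x = w g x *: E (g * x)%g x.
Proof. by rewrite /twisted_regmx -mulmxA gdiag_deltaMl -scalemxAr regmx_deltaM. Qed.

Lemma phase_equiv_twisted_regmx w w' :
  cohomologous w w' -> phase_equiv (twisted_regmx w') (twisted_regmx w).
Proof.
case=> mu [mu1 ww']; exists (gdiag mu), (fun g => (mu g)^-1).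
split=> [|g]; first exact: gdiag_unitary.
split; first by rewrite normfV mu1 invr1.
rewrite /twisted_regmx -mulmxA gdiagM mulmxA gdiag_regmx -mulmxA gdiagM scalemxAr -gdiagZ.
congr (_ *m gdiag _); apply: funext => x.
have := norm1_neq0 (mu1 g); have := norm1_neq0 (mu1 (g * x)%g).
by rewrite ww' => mugx mug; field; rewrite mugx mug.
Qed.

Section Absorption.
Variable n : nat.

Definition gblock (A : gT -> 'M[C]_n) : 'M[C]_(n * #|gT|) := \sum_x A x *t E x x.

Lemma gblockM A B : gblock A *m gblock B = gblock (fun x => A x *m B x).
Proof.
rewrite /gblock mulmx_suml; apply: eq_bigr => x _; rewrite mulmx_sumr.
under eq_bigr => y _ do rewrite tensmx_mul gdeltaM tensmxZr.
exact: (sum_scale_eq (fun y => A x *m B y *t E x y)).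
Qed.

Lemma gblock1 : gblock (fun=> 1%:M) = 1%:M.
Proof. by rewrite /gblock -tensmx_sumr sum_gdelta_diag tens1mx. Qed.

Lemma adjmx_gblock A : adjmx (gblock A) = gblock (fun x => adjmx (A x)).
Proof. by rewrite /gblock adjmx_sum; apply: eq_bigr => x _; rewrite adjmx_tens adjmx_delta. Qed.

Lemma gblock_unitary A : (forall x, unitary (A x)) -> unitary (gblock A).
Proof.
move=> uA; split; rewrite adjmx_gblock gblockM -gblock1; congr gblock; apply: funext => x.
  exact: (proj1 (uA x)).
exact: (proj2 (uA x)).
Qed.

Theorem fell_absorption (U : gT -> 'M[C]_n) w :
  (forall g, unitary (U g)) -> projective_rep U w ->
  phase_equiv (fun g => U g *t regmx g) (fun g => (1%:M : 'M[C]_n) *t twisted_regmx w g).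
Proof.
move=> uU Uw; exists (gblock (fun x => adjmx (U x))), (fun=> 1).
split=> [|g]; first by apply: gblock_unitary => x; apply: unitary_adj.
split; first exact: normr1.
rewrite scale1r /gblock mulmx_sumr mulmx_suml [in RHS](reindex_inj (mulgI g)) /=.
apply: eq_bigr => x _; rewrite !tensmx_mul mul1mx twisted_regmx_deltaM deltaM_regmx.
rewrite tensmxZr -tensmxZl; congr (_ *t _).
have [_ Ux1] := uU x.
(* insert U x (U x)^* = 1 on the right and use U g U x = w g x U (g x) *)
rewrite -[RHS]mulmx1 -Ux1 mulmxA -(mulmxA _ (U g)) Uw -scalemxAr -scalemxAl.
by rewrite (proj1 (uU _)) mul1mx.
Qed.

End Absorption.

Lemma card_finGroup_gt0 : (0 < #|gT|)%N.
Proof. by apply/card_gt0P; exists 1%g. Qed.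

Lemma onsite_lift n (delta : gT -> 'M[C]_n -> 'M[C]_n) :
  is_onsite delta -> exists W, unitary_lift delta W (fun _ _ => 1).
Proof.
case=> _ [W [uW _ WM deltaW]]; exists W; split=> [g|g A|g h].
- exact/unitarymxE.
- exact: deltaW.
by rewrite WM scale1r.
Qed.

Lemma is_onsite_regmx k :
  (0 < k)%N -> is_onsite (fun g : gT => Adr (regmx g *t (1%:M : 'M[C]_k))).
Proof.
move=> k_gt0; have uL g : unitary (regmx g *t (1%:M : 'M[C]_k)).
  exact: unitary_tens (regmx_unitary _) (unitary1 _ _).
have L_rep : projective_rep (fun g : gT => regmx g *t (1%:M : 'M[C]_k)) (fun _ _ => 1).
  by move=> g h; rewrite tensmx_mul regmxM mulmx1 scale1r.
split; first by apply: is_LPS_Adr L_rep; rewrite // muln_gt0 card_finGroup_gt0.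
exists (fun g => regmx g *t 1%:M); split=> [g||g h|//].
- exact/unitarymxE.
- by rewrite regmx1 tens1mx.
by rewrite L_rep scale1r.
Qed.

Lemma phase_equiv_stabilized n k (U : gT -> 'M[C]_n) w :
  (forall g, unitary (U g)) -> projective_rep U w ->
  phase_equiv (fun g => U g *t (regmx g *t (1%:M : 'M[C]_k)))
              (fun g => twisted_regmx w g *t ((1%:M : 'M[C]_n) *t (1%:M : 'M[C]_k))).
Proof.
move=> uU Uw; apply: phase_equiv_trans (phase_equiv_sym (phase_equiv_tensA _ _ _)) _.
apply: phase_equiv_trans (phase_equiv_tensA _ _ _).
apply: phase_equiv_tens (phase_equiv_refl _).
exact: phase_equiv_trans (fell_absorption uU Uw) (phase_equiv_tensC _ _).
Qed.

Lemma stably_equiv_cohomologous n n' (beta : gT -> 'M[C]_n -> 'M[C]_n)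
    (beta' : gT -> 'M[C]_n' -> 'M[C]_n') U U' w w' :
  (0 < n)%N -> (0 < n')%N -> unitary_lift beta U w -> unitary_lift beta' U' w' ->
  cohomologous w w' -> stably_equiv beta beta'.
Proof.
move=> n_gt0 n'_gt0 [uU betaU Uw] [uU' betaU' U'w'] ww'.
exists (#|gT| * n')%N, (#|gT| * n)%N,
  (fun g => Adr (regmx g *t (1%:M : 'M[C]_n'))), (fun g => Adr (regmx g *t (1%:M : 'M[C]_n))).
split; [exact: is_onsite_regmx | exact: is_onsite_regmx |].
apply: LPS_equiv_phase_equiv; last 2 first.
- by move=> g; apply: tens_map_Adr (betaU g) _.
- by move=> g; apply: tens_map_Adr (betaU' g) _.
apply: phase_equiv_trans (phase_equiv_stabilized _ uU Uw) _.
apply: phase_equiv_trans (phase_equiv_sym (phase_equiv_stabilized _ uU' U'w')).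
apply: phase_equiv_tens; last exact: phase_equiv_tensC.
exact/phase_equiv_twisted_regmx/cohomologous_sym.
Qed.

Lemma cocycle_mul1 (w : gT -> gT -> C) : cocycle_mul w (fun _ _ => 1) = w.
Proof. by apply: funext => g; apply: funext => h; apply: mulr1. Qed.

Lemma stably_equiv_Omega n n' (beta : gT -> 'M[C]_n -> 'M[C]_n)
    (beta' : gT -> 'M[C]_n' -> 'M[C]_n') :
  is_LPS beta -> is_LPS beta' ->
  stably_equiv beta beta' <-> cohomologous (Omega beta) (Omega beta').
Proof.
move=> beta_LPS beta'_LPS; have [n_gt0 _ _ _] := beta_LPS; have [n'_gt0 _ _ _] := beta'_LPS.
have [U Ulift] := Omega_lift beta_LPS; have [U' U'lift] := Omega_lift beta'_LPS.
split; last exact: stably_equiv_cohomologous n_gt0 n'_gt0 Ulift U'lift.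
case=> m [m' [delta [delta' [delta_onsite /onsite_lift [W' W'lift] equiv]]]].
have [[m_gt0 _ _ _] _] := delta_onsite; have [W Wlift] := onsite_lift delta_onsite.
rewrite -(cocycle_mul1 (Omega beta)) -(cocycle_mul1 (Omega beta')).
apply: cohomologous_LPS_equiv equiv; first by rewrite muln_gt0 n_gt0.
  exact: unitary_lift_stack Ulift Wlift.
exact: unitary_lift_stack U'lift W'lift.
Qed.

Lemma Omega_stack n n' (beta : gT -> 'M[C]_n -> 'M[C]_n) (beta' : gT -> 'M[C]_n' -> 'M[C]_n') :
  is_LPS beta -> is_LPS beta' ->
  cohomologous (Omega (stack beta beta')) (cocycle_mul (Omega beta) (Omega beta')).
Proof.
move=> beta_LPS beta'_LPS; have [n_gt0 _ _ _] := beta_LPS; have [n'_gt0 _ _ _] := beta'_LPS.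
have [U Ulift] := Omega_lift beta_LPS; have [U' U'lift] := Omega_lift beta'_LPS.
apply: Omega_cohomologous (unitary_lift_stack Ulift U'lift).
by rewrite muln_gt0 n_gt0.
Qed.

Lemma Omega_surjective (w : gT -> gT -> C) :
  U1_2cocycle w -> exists n (beta : gT -> 'M[C]_n -> 'M[C]_n),
    is_LPS beta /\ cohomologous (Omega beta) w.
Proof.
case=> w1 w_cocycle; have uR := twisted_regmx_unitary w1.
have Rw := twisted_regmx_projective w_cocycle.
exists #|gT|, (fun g => Adr (twisted_regmx w g)); split.
  exact: is_LPS_Adr card_finGroup_gt0 uR Rw.
by apply: Omega_cohomologous card_finGroup_gt0 _; split.
Qed.

Lemma stack_inverse n (beta : gT -> 'M[C]_n -> 'M[C]_n) :
  is_LPS beta -> exists n' (beta' : gT -> 'M[C]_n' -> 'M[C]_n'),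
    is_LPS beta' /\ stably_equiv (stack beta beta') (@trivial_LPS R gT).
Proof.
move=> beta_LPS; have [n_gt0 _ _ _] := beta_LPS.
have [U [uU betaU UOmega]] := Omega_lift beta_LPS; have [Omega1 _] := Omega_cocycle beta_LPS.
pose Ubar g := map_mx Num.conj (U g).
have uUbar g : unitary (Ubar g) by apply: unitary_conj.
have Ubar_rep : projective_rep Ubar (fun g h => (Omega beta g h)^*).
  by move=> g h; rewrite /Ubar -map_mxM UOmega map_mxZ.
exists n, (fun g => Adr (Ubar g)); split; first exact: is_LPS_Adr n_gt0 uUbar Ubar_rep.
apply: (stably_equiv_cohomologous (U := fun g => U g *t Ubar g) (U' := fun=> 1%:M)
  (w := cocycle_mul (Omega beta) (fun g h => (Omega beta g h)^*)) (w' := fun _ _ => 1)).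
- by rewrite muln_gt0 n_gt0.
- by [].
- by apply: unitary_lift_stack; split.
- split=> [g|g A|g h]; [exact: unitary1 | by rewrite Adr1 | by rewrite mulmx1 scale1r].
exists (fun=> 1); split=> [g|g h]; first exact: normr1.
by rewrite /cocycle_mul norm1_conjMr // invr1 !mulr1.
Qed.

End Symmetries.

Theorem lemmaA2 (R : realType) (gT : finGroupType) :
  exists Omega : forall n : nat, (gT -> 'M[R[i]]_n -> 'M[R[i]]_n) -> gT -> gT -> R[i],
    [/\ (forall n (beta : gT -> 'M[R[i]]_n -> 'M[R[i]]_n),
           is_LPS beta -> U1_2cocycle (Omega n beta)),
        (forall n n' (beta : gT -> 'M[R[i]]_n -> 'M[R[i]]_n)
                     (beta' : gT -> 'M[R[i]]_n' -> 'M[R[i]]_n'),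
           is_LPS beta -> is_LPS beta' ->
           (stably_equiv beta beta' <-> cohomologous (Omega n beta) (Omega n' beta'))),
        (forall n n' (beta : gT -> 'M[R[i]]_n -> 'M[R[i]]_n)
                     (beta' : gT -> 'M[R[i]]_n' -> 'M[R[i]]_n'),
           is_LPS beta -> is_LPS beta' ->
           cohomologous (Omega (n * n')%N (stack beta beta'))
                        (cocycle_mul (Omega n beta) (Omega n' beta'))),
        (forall w : gT -> gT -> R[i], U1_2cocycle w ->
           exists n (beta : gT -> 'M[R[i]]_n -> 'M[R[i]]_n),
             is_LPS beta /\ cohomologous (Omega n beta) w)
      & (forall n (beta : gT -> 'M[R[i]]_n -> 'M[R[i]]_n), is_LPS beta ->
           exists n' (beta' : gT -> 'M[R[i]]_n' -> 'M[R[i]]_n'),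
             is_LPS beta' /\ stably_equiv (stack beta beta') (@trivial_LPS R gT))].
Proof.
exists (fun n beta => Omega beta); split.
- exact: Omega_cocycle.
- exact: stably_equiv_Omega.
- exact: Omega_stack.
- exact: Omega_surjective.
- exact: stack_inverse.
Qed.
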